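(* Let $X$ be a set, $T:\mathcal P(X)\to\mathcal P(X)$ an order reversing quasi involution, and $X_0=\{x\in X: x\in T(\{x\})\}$. If $K\subseteq X$ satisfies $K=TK$, then $K\subseteq X_0$.
   Context: $\mathcal P(X)$ denotes the power set of $X$. A map $T:\mathcal P(X)\to\mathcal P(X)$ is an order reversing quasi involution if for all $K,L\subseteq X$: (i) $K\subseteq TTK$, and (ii) $L\subseteq K$ implies $TK\subseteq TL$. *)

Definition subset {X : Type} (K L : X -> Prop) : Prop := forall x, K x -> L x.

Definition set_eq {X : Type} (K L : X -> Prop) : Prop := subset K L /\ subset L K.

Definition singleton {X : Type} (x : X) : X -> Prop := fun y => y = x.

Definition order_reversing_quasi_involution {X : Type}
  (T : (X -> Prop) -> (X -> Prop)) : Prop :=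
  (forall K, subset K (T (T K))) /\
  (forall K L, subset L K -> subset (T K) (T L)).

Definition X0 {X : Type} (T : (X -> Prop) -> (X -> Prop)) : X -> Prop :=
  fun x => T (singleton x) x.


Lemma singleton_subset {X : Type} (K : X -> Prop) (x : X) :
  K x -> subset (singleton x) K.
Proof.
  intros Kx y Hy. unfold singleton in Hy. subst y. exact Kx.
Qed.

Lemma subset_X0_of_antitone {X : Type} (T : (X -> Prop) -> (X -> Prop))
  (T_antitone : forall K L, subset L K -> subset (T K) (T L))
  (K : X -> Prop) (K_sub_TK : subset K (T K)) : subset K (X0 T).
Proof.
  intros x Kx.
  exact (T_antitone K (singleton x) (singleton_subset K x Kx) x (K_sub_TK x Kx)).
Qed.

Theorem lemma6p1 (X : Type) (T : (X -> Prop) -> (X -> Prop))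
  (HT : order_reversing_quasi_involution T) (K : X -> Prop)
  (HK : set_eq K (T K)) : subset K (X0 T).
Proof.
  destruct HT as [_ T_antitone]. destruct HK as [K_sub_TK _].
  exact (subset_X0_of_antitone T T_antitone K K_sub_TK).
Qed.
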